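(* Let $\Theta=\{\theta_0,\ldots,\theta_n\}\subset\mathbb{R}$ and let $F$ and $G$ be experiments with signal spaces $\mathcal{X}=[\underline{x},\overline{x}]$ and $\mathcal{Y}=[\underline{y},\overline{y}]$ and conditional densities $f(\cdot\mid\theta)$, $g(\cdot\mid\theta)$. Then $F\succeq_{\textup{LB}}G$ if and only if, for every $\boldsymbol{b}=(b_0,\ldots,b_n)\in\mathbb{R}^{n+1}$, \[ \int_{\mathcal{X}}\Big(\sum_{i=0}^{n} b_i f(x\mid\theta_i)\Big)_{+}\,dx\;\geq\;\int_{\mathcal{Y}}\Big(\sum_{i=0}^{n} b_i g(y\mid\theta_i)\Big)_{+}\,dy, \] where $(s)_+=\max(s,0)$.
   Context: States: $\Theta=\{\theta_0,\ldots,\theta_n\}\subset\mathbb{R}$. An experiment $F$ specifies, for each $\theta\in\Theta$, an absolutely continuous distribution $F(\cdot\mid\theta)$ with density $f(\cdot\mid\theta)$ of a signal $X$ taking values in a compact interval $\mathcal{X}=[\underline{x},\overline{x}]$; similarly $G$ has densities $g(\cdot\mid\theta)$ on $\mathcal{Y}=[\underline{y},\overline{y}]$ for a signal $Y$. Let $\widehat{\Delta}_n=\{\boldsymbol{q}\in[0,1]^n:\sum_{i=1}^n q_i\le 1\}$; a prior $\boldsymbol{q}=(q_1,\ldots,q_n)\in\widehat{\Delta}_n$ assigns probability $q_i$ to $\theta_i$ ($i\ge1$) and $q_0=1-\sum_{i=1}^n q_i$ to $\theta_0$. Given $\boldsymbol{q}$, $f_{\boldsymbol{q}}=\sum_{i=0}^n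 q_i f(\cdot\mid\theta_i)$ is the unconditional density of $X$ (distribution $F_{\boldsymbol{q}}$), and the posterior vector is $\boldsymbol{p}_F(x;\boldsymbol{q})=(p_{F,1}(x;\boldsymbol{q}),\ldots,p_{F,n}(x;\boldsymbol{q}))$ with $p_{F,i}(x;\boldsymbol{q})=q_i f(x\mid\theta_i)/f_{\boldsymbol{q}}(x)$; $\boldsymbol{p}_F(\boldsymbol{q})$ denotes the random vector $\boldsymbol{p}_F(X;\boldsymbol{q})$ with $X\sim F_{\boldsymbol{q}}$ (analogously for $G$). For random vectors $\boldsymbol{\mu},\boldsymbol{\nu}$ in $\mathbb{R}^n$ with equal means: $\boldsymbol{\mu}\succeq_{\textup{cx}}\boldsymbol{\nu}$ (convex order) if $\mathbb{E}[C(\boldsymbol{\mu})]\ge\mathbb{E}[C(\boldsymbol{\nu})]$ for all convex $C:\mathbb{R}^n\to\mathbb{R}$; $\boldsymbol{\mu}\succeq_{\textup{lcx}}\boldsymbol{\nu}$ (linear convex order) if $\boldsymbol{b}\cdot\boldsymbol{\mu}\succeq_{\textup{cx}}\boldsymbol{b}\cdot\boldsymbol{\nu}$ for all $\boldsymbol{b}\in\mathbb{R}^n$. The linear-Blackwell order: $F\succeq_{\textup{LB}}G$ if $\boldsymbol{p}_F(\boldsymbol{q})\succeq_{\textup{lcx}}\boldsymbol{p}_G(\boldsymbol{q})$ for every $\boldsymbol{q}\in\widehat{\Delta}_n$. *)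

From mathcomp Require Import all_boot all_order all_algebra.
From mathcomp Require Import all_classical all_reals all_analysis.
Set Implicit Arguments. Unset Strict Implicit. Unset Printing Implicit Defensive.
Import Order.TTheory GRing.Theory Num.Theory.
Local Open Scope classical_set_scope.
Local Open Scope ring_scope.

Section Blackwell.
Variable R : realType.

Definition is_experiment (n : nat) (a b : R) (f : 'I_n.+1 -> R -> R) : Prop :=
  a < b /\
  forall i : 'I_n.+1,
    measurable_fun `[a, b]%classic (f i) /\
    (forall x, a <= x <= b -> 0 <= f i x) /\
    (\int[lebesgue_measure]_(x in `[a, b]%classic) (f i x)%:E = 1)%E.

(* priors q = (q_1,..,q_n) in \hat{Delta}_n, indexed by 'I_n;
   q_j is the probability of theta_{j+1} *)
Definition in_hat_simplex (n : nat) (q : 'I_n -> R) : Prop :=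
  (forall j, 0 <= q j) /\ \sum_(j < n) q j <= 1.

Definition full_prior (n : nat) (q : 'I_n -> R) (i : 'I_n.+1) : R :=
  match unlift ord0 i with
  | Some j => q j
  | None => 1 - \sum_(j < n) q j
  end.

Definition mix_density (n : nat) (f : 'I_n.+1 -> R -> R) (q : 'I_n -> R)
  (x : R) : R :=
  \sum_(i < n.+1) full_prior q i * f i x.

Definition posterior (n : nat) (f : 'I_n.+1 -> R -> R) (q : 'I_n -> R)
  (j : 'I_n) (x : R) : R :=
  q j * f (lift ord0 j) x / mix_density f q x.

Definition expect_on (a b : R) (dens : R -> R) (h : R -> R) : \bar R :=
  (\int[lebesgue_measure]_(x in `[a, b]%classic) (h x * dens x)%:E)%E.

Definition convex_fun (C : R -> R) : Prop :=
  forall (x y t : R), 0 <= t <= 1 ->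
    C (t * x + (1 - t) * y) <= t * C x + (1 - t) * C y.

Definition cx_ge (a1 b1 : R) (dens1 : R -> R) (U : R -> R)
                 (a2 b2 : R) (dens2 : R -> R) (V : R -> R) : Prop :=
  forall C : R -> R, convex_fun C ->
    (expect_on a2 b2 dens2 (C \o V) <= expect_on a1 b1 dens1 (C \o U))%E.

Definition lcx_ge (n : nat) (a1 b1 : R) (dens1 : R -> R) (U : 'I_n -> R -> R)
                 (a2 b2 : R) (dens2 : R -> R) (V : 'I_n -> R -> R) : Prop :=
  (forall j, expect_on a1 b1 dens1 (U j) = expect_on a2 b2 dens2 (V j)) /\
  forall bb : 'I_n -> R,
    cx_ge a1 b1 dens1 (fun x => \sum_(j < n) bb j * U j x)
          a2 b2 dens2 (fun y => \sum_(j < n) bb j * V j y).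

Definition LB_ge (n : nat) (xl xu : R) (f : 'I_n.+1 -> R -> R)
                 (yl yu : R) (g : 'I_n.+1 -> R -> R) : Prop :=
  forall q : 'I_n -> R, in_hat_simplex q ->
    lcx_ge xl xu (mix_density f q) (posterior f q)
           yl yu (mix_density g q) (posterior g q).

End Blackwell.

From mathcomp Require Import all_boot all_order all_algebra.
From mathcomp Require Import all_classical all_reals all_analysis.
From mathcomp Require Import measurable_realfun ring lra.
Set Implicit Arguments. Unset Strict Implicit. Unset Printing Implicit Defensive.
Import Order.TTheory GRing.Theory Num.Theory.
Local Open Scope classical_set_scope.
Local Open Scope ring_scope.

(* Fix a prior q and weights b, and let U = b . p_F(q). For a ramp
   C(u) = (al + be u)_+, multiplying by the mixture density f_q clears the
   denominator of the posterior:
     E[C(U)] = \int (sum_i q_i (al + be b_i) f(x | theta_i))_+ dx,   b_0 := 0,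
   so the integral condition says exactly that every ramp has a larger
   expectation under F than under G.  Necessity uses the uniform prior and a
   single ramp, which recovers an arbitrary coefficient vector.  For
   sufficiency, U ranges in [-B, B] with B = sum_j |b_j| + 1, where a convex C
   is approximated within e from above by its piecewise-linear interpolant: a
   combination of ramps whose negative weights all sit on ramps that are
   affine on [-B, B], and an affine ramp has the same expectation under every
   experiment.  The means agree since E[p_j] = q_j for both experiments. *)

Section Ramps.
Variable R : realFieldType.

Definition ramp (al be u : R) : R := Num.max (al + be * u) 0.

(* [(w, (al, be))] stands for the term [w * ramp al be]. *)
Definition ramp_comb (s : seq (R * (R * R))) (u : R) : R :=
  \sum_(k <- s) k.1 * ramp k.2.1 k.2.2 u.

Definition ramp_affine_on (B al be : R) : Prop :=
  forall u, - B <= u <= B -> 0 <= al + be * u.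

Definition ramp_admissible (B : R) (s : seq (R * (R * R))) : Prop :=
  forall k, k \in s -> 0 <= k.1 \/ ramp_affine_on B k.2.1 k.2.2.

Lemma ramp_comb_shift c s u : ramp_comb ((c, (1, 0)) :: s) u = c + ramp_comb s u.
Proof. by rewrite /ramp_comb big_cons /ramp mul0r addr0 (max_idPl ler01) mulr1. Qed.

End Ramps.

Section ConvexInterpolation.
Variables (R : realFieldType) (C : R -> R).
Hypothesis convexC : forall x y t : R, 0 <= t <= 1 ->
  C (t * x + (1 - t) * y) <= t * C x + (1 - t) * C y.

Lemma convex_chord x y z : x <= y -> y <= z ->
  (z - x) * C y <= (z - y) * C x + (y - x) * C z.
Proof.
move=> xy yz; have [exz|nxz] := eqVneq x z.
  have -> : y = x by apply/eqP; rewrite eq_le xy exz yz.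
  by rewrite exz !subrr !mul0r addr0.
have xz : 0 < z - x by rewrite subr_gt0 lt_neqAle nxz (le_trans xy yz).
pose t := (z - y) / (z - x).
have t01 : 0 <= t <= 1.
  apply/andP; split; first by apply: divr_ge0; [rewrite subr_ge0 | exact: ltW].
  by rewrite ler_pdivrMr // mul1r lerD2l lerN2.
have ey : y = t * x + (1 - t) * z by rewrite /t; field; rewrite lt0r_neq0.
have := ler_wpM2l (ltW xz) (convexC x z t01); rewrite -ey.
suff -> : (z - x) * (t * C x + (1 - t) * C z) = (z - y) * C x + (y - x) * C z by [].
by rewrite /t; field; rewrite lt0r_neq0.
Qed.

Definition slope x y := (C y - C x) / (y - x).

Lemma le_slope x y x' y' : x < y -> x' < y' -> x <= x' -> y <= y' ->
  slope x y <= slope x' y'.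
Proof.
move=> xy x'y' xx' yy'.
have slope_r u v w : u < v -> v <= w -> slope u v <= slope u w.
  move=> uv vw; have uw := lt_le_trans uv vw.
  rewrite /slope ler_pdivrMr ?subr_gt0 // mulrAC ler_pdivlMr ?subr_gt0 //.
  have := convex_chord (ltW uv) vw; lra.
have slope_l u v w : u <= v -> v < w -> slope u w <= slope v w.
  move=> uv vw; have uw := le_lt_trans uv vw.
  rewrite /slope ler_pdivrMr ?subr_gt0 // mulrAC ler_pdivlMr ?subr_gt0 //.
  have := convex_chord uv (ltW vw); lra.
exact: le_trans (slope_r _ _ _ xy yy') (slope_l _ _ _ xx' x'y').
Qed.

Variables (B : R) (K : nat).
Hypothesis B_gt0 : 0 < B.

Let h := 2 * B / K.+1%:R.
Let node (k : nat) := - B + k%:R * h.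
Let grid_slope (k : nat) := slope (node k) (node k.+1).
Let chord (k : nat) (u : R) := C (node k) + grid_slope k * (u - node k).

Let h_gt0 : 0 < h. Proof. by rewrite divr_gt0 ?ltr0n // mulr_gt0. Qed.

Let nodeS k : node k.+1 = node k + h.
Proof. by rewrite /node -addn1 natrD; ring. Qed.

Let node_le i j : (i <= j)%N -> node i <= node j.
Proof. by move=> ij; rewrite lerD2l ler_wpM2r ?ler_nat // ltW. Qed.

Let node_lt k : node k < node k.+1.
Proof. by rewrite nodeS ltrDl. Qed.

Let node0 : node 0 = - B. Proof. by rewrite /node mul0r addr0. Qed.

Let node_last : node K.+1 = B.
Proof. by rewrite /node /h mulrC divfK ?pnatr_eq0 //; ring. Qed.

Let grid_slope_mul k : grid_slope k * h = C (node k.+1) - C (node k).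
Proof.
by rewrite /grid_slope /slope [in X in _ / X]nodeS addrAC subrr add0r mulfVK ?gt_eqF.
Qed.

Let le_grid_slope k : grid_slope k <= grid_slope k.+1.
Proof. by apply: le_slope; rewrite ?node_lt // ltW. Qed.

Let convex_interp (J : nat) (u : R) : R :=
  chord 0 u + \sum_(k < J) (grid_slope k.+1 - grid_slope k) * Num.max (u - node k.+1) 0.

Let convex_interpS J u : convex_interp J.+1 u =
  convex_interp J u + (grid_slope J.+1 - grid_slope J) * Num.max (u - node J.+1) 0.
Proof. by rewrite /convex_interp big_ord_recr /= addrA. Qed.

Let convex_interp_right J u : node J <= u -> convex_interp J u = chord J u.
Proof.
elim: J u => [|J IH] u hu; first by rewrite /convex_interp big_ord0 addr0.
rewrite convex_interpS IH ?(le_trans (ltW (node_lt J))) //.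
rewrite (_ : Num.max _ 0 = u - node J.+1); last by apply/max_idPl; rewrite subr_ge0.
have eC : C (node J.+1) = C (node J) + grid_slope J * h.
  by rewrite grid_slope_mul; ring.
by rewrite /chord eC nodeS; ring.
Qed.

Let convex_interp_cell J j u : (j <= J)%N -> node j <= u <= node j.+1 ->
  convex_interp J u = chord j u.
Proof.
elim: J => [|J IH]; first by rewrite leqn0 => /eqP-> /andP[+ _]; exact: convex_interp_right.
rewrite leq_eqVlt => /orP[/eqP-> /andP[+ _]|]; first exact: convex_interp_right.
rewrite ltnS => jJ /andP[h1 h2]; rewrite convex_interpS IH ?h1 ?h2 //.
rewrite (_ : Num.max _ 0 = 0) ?mulr0 ?addr0 //.
by apply/max_idPr; rewrite subr_le0 (le_trans h2) ?node_le.
Qed.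

Let grid_cover J u : node 0 <= u <= node J.+1 ->
  exists2 j, (j <= J)%N & node j <= u <= node j.+1.
Proof.
elim: J => [|J IH] /andP[h1 h2]; first by exists 0%N; rewrite ?h1 ?h2.
have [hu|hu] := leP u (node J.+1).
  by have [j jJ hj] := IH (introT andP (conj h1 hu)); exists j => //; exact: leqW.
by exists J.+1; rewrite ?(ltW hu) ?h2.
Qed.

Let le_chord j u : node j <= u <= node j.+1 -> C u <= chord j u.
Proof.
move=> /andP[h1 h2]; have := convex_chord h1 h2.
have eC : C (node j.+1) = C (node j) + grid_slope j * h by rewrite grid_slope_mul; ring.
rewrite eC nodeS => chordC; rewrite -(ler_pM2l h_gt0) /chord; lra.
Qed.

Let convex_interp_bounds u : - B <= u <= B ->
  C u <= convex_interp K u <= C u + (slope B (B + 1) - slope (- B - 1) (- B)) * h.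
Proof.
rewrite -{1}node0 -{1}node_last => hu; have [j jK hj] := grid_cover hu.
rewrite (convex_interp_cell jK hj) (le_chord hj) //=.
move: hu hj => /andP[u_ge u_le] /andP[h1 h2].
set hi := slope B (B + 1); set lo := slope (- B - 1) (- B).
have B_lt : B < B + 1 by rewrite ltrDl.
have mB_lt : - B - 1 < - B by rewrite ltrBlDr ltrDl.
have node_ge j' : - B - 1 <= node j'.
  by apply: le_trans (ltW mB_lt) _; rewrite -node0 node_le.
have node_B j' : (j' <= K.+1)%N -> node j' <= B by rewrite -node_last; exact: node_le.
have hi_ge : grid_slope j <= hi.
  apply: le_slope; rewrite ?node_lt ?node_B ?(leqW jK) //.
  exact: le_trans (node_B j.+1 jK) (ltW B_lt).
have lo_hi : lo <= hi by apply: le_slope => //; have := B_gt0; lra.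
have [->|neq] := eqVneq u (node j).
  by rewrite /chord subrr mulr0 addr0 lerDl mulr_ge0 ?(ltW h_gt0) ?subr_ge0.
have lt_u : node j < u by rewrite lt_neqAle eq_sym neq h1.
have lo_le : lo <= slope (node j) u by apply: le_slope; rewrite ?node_ge // -node0.
have eC : C u = C (node j) + slope (node j) u * (u - node j).
  by rewrite /slope mulfVK ?subr_eq0 //; ring.
have uh : u - node j <= h by rewrite lerBlDl -nodeS.
have u0 : 0 <= u - node j by rewrite subr_ge0.
rewrite /chord eC; nra.
Qed.

Lemma convex_grid_ramp_comb : exists2 s, ramp_admissible B s &
  forall u, - B <= u <= B ->
    C u <= ramp_comb s u <= C u + (slope B (B + 1) - slope (- B - 1) (- B)) * h.
Proof.
exists ((C (- B), (1, 0)) :: (grid_slope 0, (B, 1)) ::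
  [seq (grid_slope k.+1 - grid_slope k, (- node k.+1, 1)) | k <- index_iota 0 K]).
  move=> k; rewrite !inE => /orP[/eqP->|/orP[/eqP->|/mapP[i _ ->]]].
  - by right => u _; rewrite mul0r addr0 ler01.
  - by right => u /andP[uB _]; rewrite mul1r -lerBlDl sub0r.
  - by left; rewrite subr_ge0 le_grid_slope.
move=> u hu; rewrite /ramp_comb !big_cons big_map big_mkord.
suff -> : C (- B) * ramp 1 0 u + (grid_slope 0 * ramp B 1 u +
    \sum_(i < K) (grid_slope i.+1 - grid_slope i) * ramp (- node i.+1) 1 u) =
  convex_interp K u by exact: convex_interp_bounds.
rewrite /ramp /convex_interp /chord node0 mul0r addr0 mul1r.
rewrite (max_idPl ler01) (_ : Num.max _ 0 = B + u); last first.
  by apply/max_idPl; move: hu => /andP[+ _]; rewrite -lerBlDl sub0r.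
rewrite opprK mulr1 addrA [u + B]addrC; congr (_ + _).
by apply: eq_bigr => k _; rewrite [- _ + u]addrC.
Qed.

End ConvexInterpolation.

Lemma convex_ramp_comb_approx (R : archiRealFieldType) (C : R -> R) (B e : R) :
  (forall x y t : R, 0 <= t <= 1 ->
    C (t * x + (1 - t) * y) <= t * C x + (1 - t) * C y) ->
  0 < B -> 0 < e ->
  exists2 s, ramp_admissible B s &
    forall u, - B <= u <= B -> C u <= ramp_comb s u <= C u + e.
Proof.
move=> convexC B_gt0 e_gt0.
set d := slope C B (B + 1) - slope C (- B - 1) (- B).
have d_ge0 : 0 <= d by rewrite subr_ge0; apply: le_slope => //; lra.
have [K leK] : exists K : nat, d * (2 * B) / e < K%:R.
  exists (Num.Def.archi_bound (d * (2 * B) / e)); apply: archi_boundP.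
  exact: divr_ge0 (mulr_ge0 d_ge0 (mulr_ge0 (ler0n _ 2) (ltW B_gt0))) (ltW e_gt0).
have [s adm_s bnd_s] := convex_grid_ramp_comb convexC K B_gt0.
exists s => // u /bnd_s /andP[-> le_s] /=; apply: le_trans le_s _; rewrite lerD2l.
rewrite -/d mulrA ler_pdivrMr ?ltr0n // -addn1 natrD.
by move: leK; rewrite ltr_pdivrMr // => ?; nra.
Qed.

(* The integral is a supremum over simple functions below the integrand, so
   it is monotone without any measurability assumption; this spares proving
   that a convex function is measurable. *)
Lemma le_integral_nonmeasurable d (T : measurableType d) (R : realType)
    (mu : {measure set T -> \bar R}) (D : set T) (f g : T -> \bar R) :
  (forall x, D x -> (f x <= g x)%E) ->
  (\int[mu]_(x in D) f x <= \int[mu]_(x in D) g x)%E.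
Proof.
move=> fg; rewrite /integral /=; have fgD := lee_restrict fg.
apply: leeB; apply: ereal_sup_le => _ [h hh <-]; exists h => // x.
  apply: (le_trans (hh x)).
  by apply: (@funepos_le _ _ setT); [move=> y _; exact: fgD | exact: in_setT].
apply: (le_trans (hh x)).
by apply: (@funeneg_le _ _ setT); [move=> y _; exact: fgD | exact: in_setT].
Qed.

Section Priors.
Variables (R : realType) (n : nat).
Implicit Types (q bb : 'I_n -> R).

Definition extend_by0 bb (i : 'I_n.+1) : R :=
  if unlift ord0 i is Some j then bb j else 0.

Definition ramp_coef q bb (al be : R) (i : 'I_n.+1) : R :=
  full_prior q i * (al + be * extend_by0 bb i).

Lemma full_prior_lift q j : full_prior q (lift ord0 j) = q j.
Proof. by rewrite /full_prior liftK. Qed.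

Lemma full_prior_ord0 q : full_prior q ord0 = 1 - \sum_(j < n) q j.
Proof. by rewrite /full_prior unlift_none. Qed.

Lemma full_prior_ge0 q i : in_hat_simplex q -> 0 <= full_prior q i.
Proof.
move=> [q_ge0 q_le1]; rewrite /full_prior.
by case: (unlift ord0 i) => [j|]; rewrite ?subr_ge0.
Qed.

Lemma sum_full_prior q : \sum_(i < n.+1) full_prior q i = 1.
Proof.
rewrite big_ord_recl full_prior_ord0 (eq_bigr _ (fun j _ => full_prior_lift q j)).
by rewrite subrK.
Qed.

Lemma ramp_coef_ge0 q bb (B al be : R) i : in_hat_simplex q ->
  (forall j, `|bb j| <= B) -> 0 <= B -> ramp_affine_on B al be ->
  0 <= ramp_coef q bb al be i.
Proof.
move=> hq bbB B_ge0 affine; rewrite mulr_ge0 ?full_prior_ge0 // affine //.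
rewrite /extend_by0; case: (unlift ord0 i) => [j|]; first by rewrite -ler_norml.
by rewrite oppr_le0 B_ge0.
Qed.

End Priors.

Definition posterior_comb (R : realType) (n : nat) (f : 'I_n.+1 -> R -> R)
  (q bb : 'I_n -> R) (x : R) : R :=
  \sum_(j < n) bb j * posterior f q j x.

Definition pos_comb_integral (R : realType) (n : nat) (a b : R)
  (f : 'I_n.+1 -> R -> R) (c : 'I_n.+1 -> R) : \bar R :=
  (\int[lebesgue_measure]_(x in `[a, b]%classic)
    (Num.max (\sum_(i < n.+1) c i * f i x) 0)%:E)%E.

Section Experiment.
Variables (R : realType) (n : nat) (a b : R) (f : 'I_n.+1 -> R -> R).
Hypothesis hf : is_experiment a b f.
Local Notation D := (`[a, b]%classic : set R).
Local Notation mu := (@lebesgue_measure R).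
Implicit Types (q bb : 'I_n -> R) (c : 'I_n.+1 -> R).

Let mD : measurable D. Proof. exact: measurable_itv. Qed.

Lemma density_ge0 i x : D x -> 0 <= f i x.
Proof.
move=> Dx; have [_ /(_ i) [_ [f_ge0 _]]] := hf; apply: f_ge0.
by move: Dx; rewrite /= in_itv.
Qed.

Lemma integral_density i : (\int[mu]_(x in D) (f i x)%:E = 1)%E.
Proof. by have [_ /(_ i) [_ [_ ->]]] := hf. Qed.

Lemma integrable_density i : mu.-integrable D (EFin \o f i).
Proof.
have [_ /(_ i) [mf _]] := hf; have int1 := integral_density i.
apply/integrableP; split; first exact/measurable_EFinP.
rewrite (@eq_integral _ _ _ mu D (fun x => (f i x)%:E)) ?int1 ?ltry // => x; rewrite inE => Dx.
by rewrite /= ger0_norm // density_ge0.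
Qed.

Let integrableZ_density r i :
  mu.-integrable D (fun x => r%:E * (EFin \o f i) x)%E.
Proof. exact: (@integrableZl _ _ _ mu D mD _ _ (integrable_density i)). Qed.

Lemma integrable_max_comb c :
  mu.-integrable D (fun x => (Num.max (\sum_(i < n.+1) c i * f i x) 0)%:E).
Proof.
have [_ mf] := hf.
apply: (@le_integrable _ _ _ mu D mD _ (fun x => (\sum_(i < n.+1) `|c i| * f i x)%:E)).
- apply/measurable_EFinP/measurable_maxr; last exact: measurable_cst.
  apply: measurable_sum => i.
  by apply: measurable_funM; [exact: measurable_cst | exact: (mf i).1].
- move=> x Dx /=; rewrite lee_fin.
  have sum_ge0 : 0 <= \sum_(i < n.+1) `|c i| * f i x.
    by apply: sumr_ge0 => i _; rewrite mulr_ge0 ?density_ge0.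
  rewrite (ger0_norm sum_ge0) ger0_norm ?le_max ?lexx ?orbT // ge_max sum_ge0 andbT.
  by apply: ler_sum => i _; rewrite ler_wpM2r ?density_ge0 ?ler_norm.
- apply: (@eq_integrable _ _ _ mu D mD
    (fun x => \sum_(i < n.+1) (`|c i|)%:E * (EFin \o f i) x)%E).
    by move=> x _; rewrite sumEFin.
  by apply: integrable_sum => // i _; exact: integrableZ_density.
Qed.

Lemma pos_comb_integral_coef_ge0 c : (forall i, 0 <= c i) ->
  pos_comb_integral a b f c = (\sum_(i < n.+1) c i)%:E.
Proof.
move=> c_ge0; rewrite /pos_comb_integral.
transitivity (\int[mu]_(x in D) (\sum_(i < n.+1) (c i)%:E * (EFin \o f i) x))%E.
  apply: eq_integral => x; rewrite inE => Dx; rewrite sumEFin; congr EFin.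
  by apply/max_idPl/sumr_ge0 => i _; rewrite mulr_ge0 ?density_ge0.
rewrite integral_sum // -sumEFin.
apply: eq_bigr => i _.
by rewrite integralZl ?integral_density ?mule1 //; exact: integrable_density.
Qed.

Lemma mix_density_ge0 q x : in_hat_simplex q -> D x -> 0 <= mix_density f q x.
Proof.
by move=> hq Dx; apply: sumr_ge0 => i _; rewrite mulr_ge0 ?full_prior_ge0 ?density_ge0.
Qed.

Lemma posterior_mul_mix q j x : in_hat_simplex q -> D x ->
  posterior f q j x * mix_density f q x = q j * f (lift ord0 j) x.
Proof.
move=> hq Dx; rewrite /posterior; have [m0|m_neq0] := eqVneq (mix_density f q x) 0.
  rewrite m0 mulr0 -full_prior_lift; apply/esym.
  move/eqP: m0; rewrite psumr_eq0 => [/allP/(_ (lift ord0 j))|i _]; last first.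
    by rewrite mulr_ge0 ?full_prior_ge0 ?density_ge0.
  by rewrite mem_index_enum => /(_ isT)/eqP.
by rewrite mulfVK.
Qed.

Lemma posterior_ge0 q j x : in_hat_simplex q -> D x -> 0 <= posterior f q j x.
Proof.
move=> hq Dx; apply: divr_ge0; last exact: mix_density_ge0.
by rewrite mulr_ge0 ?density_ge0 //; case: hq.
Qed.

Lemma posterior_le1 q j x : in_hat_simplex q -> D x -> posterior f q j x <= 1.
Proof.
move=> hq Dx; have [m0|m_neq0] := eqVneq (mix_density f q x) 0.
  by rewrite /posterior m0 invr0 mulr0 ler01.
have m_gt0 : 0 < mix_density f q x by rewrite lt0r m_neq0 mix_density_ge0.
rewrite -(ler_pM2r m_gt0) mul1r posterior_mul_mix // /mix_density.
rewrite (bigD1 (lift ord0 j)) //= full_prior_lift lerDl.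
by apply: sumr_ge0 => i _; rewrite mulr_ge0 ?full_prior_ge0 ?density_ge0.
Qed.

Lemma posterior_comb_bound q bb x : in_hat_simplex q -> D x ->
  `|posterior_comb f q bb x| <= \sum_(j < n) `|bb j|.
Proof.
move=> hq Dx; apply: le_trans (ler_norm_sum _ _ _) _; apply: ler_sum => j _.
rewrite normrM (ger0_norm (posterior_ge0 _ hq Dx)).
by rewrite ler_piMr ?posterior_le1.
Qed.

Lemma ramp_posterior_comb q bb al be x : in_hat_simplex q -> D x ->
  ramp al be (posterior_comb f q bb x) * mix_density f q x =
  Num.max (\sum_(i < n.+1) ramp_coef q bb al be i * f i x) 0.
Proof.
move=> hq Dx.
have comb_mix : posterior_comb f q bb x * mix_density f q x =
    \sum_(i < n.+1) full_prior q i * extend_by0 bb i * f i x.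
  rewrite big_ord_recl /extend_by0 unlift_none mulr0 mul0r add0r mulr_suml.
  by apply: eq_bigr => j _; rewrite -mulrA posterior_mul_mix // full_prior_lift liftK; ring.
rewrite /ramp maxr_pMl ?mix_density_ge0 // mul0r mulrDl -mulrA comb_mix.
rewrite /mix_density !mulr_sumr -big_split; congr (Num.max _ 0).
by apply: eq_bigr => i _ /=; rewrite /ramp_coef; ring.
Qed.

Lemma expect_posterior q j : in_hat_simplex q ->
  expect_on a b (mix_density f q) (posterior f q j) = (q j)%:E.
Proof.
move=> hq; rewrite /expect_on.
under eq_integral => x /[!inE] Dx do rewrite posterior_mul_mix // EFinM.
by rewrite integralZl // ?integral_density ?mule1 //; exact: integrable_density.
Qed.

Definition ramp_integral q bb (al be : R) : R :=
  fine (pos_comb_integral a b f (ramp_coef q bb al be)).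

Lemma ramp_integralE q bb al be :
  pos_comb_integral a b f (ramp_coef q bb al be) = (ramp_integral q bb al be)%:E.
Proof. by rewrite fineK // integrable_fin_num // integrable_max_comb. Qed.

Lemma ramp_integral_coef_ge0 q bb al be : (forall i, 0 <= ramp_coef q bb al be i) ->
  ramp_integral q bb al be = \sum_(i < n.+1) ramp_coef q bb al be i.
Proof. by move=> coef_ge0; rewrite /ramp_integral pos_comb_integral_coef_ge0. Qed.

Lemma ramp_integral_const q bb : in_hat_simplex q -> ramp_integral q bb 1 0 = 1.
Proof.
move=> hq; have coefE i : ramp_coef q bb 1 0 i = full_prior q i.
  by rewrite /ramp_coef mul0r addr0 mulr1.
rewrite ramp_integral_coef_ge0 => [|i]; last by rewrite coefE full_prior_ge0.
by rewrite (eq_bigr _ (fun i _ => coefE i)) sum_full_prior.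
Qed.

Lemma expect_ramp_comb q bb s : in_hat_simplex q ->
  expect_on a b (mix_density f q) (ramp_comb s \o posterior_comb f q bb) =
  (\sum_(k <- s) k.1 * ramp_integral q bb k.2.1 k.2.2)%:E.
Proof.
move=> hq; rewrite /expect_on.
transitivity (\int[mu]_(x in D) \sum_(k <- s) (k.1)%:E *
    (Num.max (\sum_(i < n.+1) ramp_coef q bb k.2.1 k.2.2 i * f i x) 0)%:E)%E.
  apply: eq_integral => x /[!inE] Dx; rewrite /= /ramp_comb mulr_suml -sumEFin.
  by apply: eq_bigr => k _; rewrite -mulrA ramp_posterior_comb // EFinM.
rewrite integral_sum // => [|k]; last first.
  exact: (@integrableZl _ _ _ mu D mD _ _ (integrable_max_comb _)).
rewrite -sumEFin; apply: eq_bigr => k _.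
by rewrite EFinM -ramp_integralE integralZl //; exact: integrable_max_comb.
Qed.

End Experiment.

Section Comparison.
Variables (R : realType) (n : nat) (xl xu yl yu : R) (f g : 'I_n.+1 -> R -> R).
Hypotheses (hF : is_experiment xl xu f) (hG : is_experiment yl yu g).
Hypothesis le_pos_comb_integral : forall c : 'I_n.+1 -> R,
  (pos_comb_integral yl yu g c <= pos_comb_integral xl xu f c)%E.
Implicit Types (q bb : 'I_n -> R).

Lemma le_ramp_integral q bb al be :
  ramp_integral yl yu g q bb al be <= ramp_integral xl xu f q bb al be.
Proof.
have := le_pos_comb_integral (ramp_coef q bb al be).
by rewrite (ramp_integralE hG) (ramp_integralE hF) lee_fin.
Qed.

Lemma le_expect_ramp_comb q bb B s : in_hat_simplex q ->
  (forall j, `|bb j| <= B) -> 0 <= B -> ramp_admissible B s ->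
  (expect_on yl yu (mix_density g q) (ramp_comb s \o posterior_comb g q bb)
   <= expect_on xl xu (mix_density f q) (ramp_comb s \o posterior_comb f q bb))%E.
Proof.
move=> hq bbB B_ge0 adm; rewrite (expect_ramp_comb hG) // (expect_ramp_comb hF) // lee_fin.
rewrite big_seq [X in _ <= X]big_seq; apply: ler_sum => k ks.
have [w_ge0|affine] := adm k ks; first by rewrite ler_wpM2l ?le_ramp_integral.
have coef_ge0 i := ramp_coef_ge0 i hq bbB B_ge0 affine.
by rewrite (ramp_integral_coef_ge0 hG) // (ramp_integral_coef_ge0 hF).
Qed.

Lemma le_expect_convex q bb C : in_hat_simplex q -> convex_fun C ->
  (expect_on yl yu (mix_density g q) (C \o posterior_comb g q bb)
   <= expect_on xl xu (mix_density f q) (C \o posterior_comb f q bb))%E.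
Proof.
move=> hq convexC; set B := \sum_(j < n) `|bb j| + 1.
have B_gt0 : 0 < B by rewrite ltr_pwDr ?ltr01 ?sumr_ge0.
have bbB j : `|bb j| <= B.
  by rewrite /B (bigD1 j) //= -addrA lerDl addr_ge0 ?sumr_ge0.
have in_range a b (h : 'I_n.+1 -> R -> R) x : is_experiment a b h -> `[a, b]%classic x ->
    - B <= posterior_comb h q bb x <= B.
  by move=> hh Dx; rewrite -ler_norml (le_trans (posterior_comb_bound hh _ hq Dx)) ?lerDl.
apply/lee_addgt0Pr => e e_gt0.
have [s adm approx] := convex_ramp_comb_approx convexC B_gt0 e_gt0.
pose s' := (- e, (1, 0)) :: s.
have le_G : (expect_on yl yu (mix_density g q) (C \o posterior_comb g q bb)
    <= expect_on yl yu (mix_density g q) (ramp_comb s \o posterior_comb g q bb))%E.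
  apply: le_integral_nonmeasurable => y Dy; rewrite lee_fin.
  apply: ler_wpM2r; first exact: (@mix_density_ge0 _ _ _ _ _ hG q y hq Dy).
  by have /approx/andP[] := in_range _ _ _ y hG Dy.
apply: le_trans le_G (le_trans (le_expect_ramp_comb hq bbB (ltW B_gt0) adm) _).
have shift : expect_on xl xu (mix_density f q) (ramp_comb s \o posterior_comb f q bb) =
    (expect_on xl xu (mix_density f q) (ramp_comb s' \o posterior_comb f q bb) + e%:E)%E.
  rewrite !(expect_ramp_comb hF) // big_cons /= (ramp_integral_const hF) // -EFinD.
  by congr EFin; ring.
rewrite shift leeD2r //; apply: le_integral_nonmeasurable => x Dx.
rewrite lee_fin; apply: ler_wpM2r; first exact: (@mix_density_ge0 _ _ _ _ _ hF q x hq Dx).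
have /approx/andP[_] := in_range _ _ _ x hF Dx.
by rewrite /= ramp_comb_shift; lra.
Qed.

Lemma LB_ge_of_le_pos_comb_integral : LB_ge xl xu f yl yu g.
Proof.
move=> q hq; split => [j|bb C convexC]; last exact: le_expect_convex.
by rewrite (expect_posterior hF) // (expect_posterior hG).
Qed.

End Comparison.

Lemma convex_ramp (R : realType) (al be : R) : convex_fun (ramp al be).
Proof.
move=> x y t /andP[t_ge0 t_le1]; rewrite /ramp.
have -> : al + be * (t * x + (1 - t) * y) = t * (al + be * x) + (1 - t) * (al + be * y).
  by ring.
have le_max0 (u : R) : u <= Num.max u 0 by rewrite le_max lexx.
have max0_ge0 (u : R) : 0 <= Num.max u 0 by rewrite le_max lexx orbT.
rewrite ge_max; apply/andP; split.
  by rewrite lerD // ler_wpM2l ?subr_ge0.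
by rewrite addr_ge0 // mulr_ge0 ?subr_ge0.
Qed.

Lemma le_pos_comb_integral_of_LB_ge (R : realType) (n : nat) (xl xu yl yu : R)
    (f g : 'I_n.+1 -> R -> R) :
  is_experiment xl xu f -> is_experiment yl yu g -> LB_ge xl xu f yl yu g ->
  forall c, (pos_comb_integral yl yu g c <= pos_comb_integral xl xu f c)%E.
Proof.
move=> hF hG hLB c.
(* With the uniform prior, b_j := c_(j+1) - c_0 and the ramp N (c_0 + u)_+,
   the ramp coefficients are exactly c. *)
pose N : R := n%:R + 1.
have N_gt0 : 0 < N by have := ler0n R n; rewrite /N; lra.
pose q : 'I_n -> R := fun=> N^-1.
have sum_q : \sum_(j < n) q j = n%:R / N.
  by rewrite /q sumr_const cardT size_enum_ord mulr_natl.
have hq : in_hat_simplex q.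
  split=> [j|]; first by rewrite invr_ge0 ltW.
  by rewrite sum_q ler_pdivrMr // mul1r lerDl.
pose bb j := c (lift ord0 j) - c ord0.
have coefE i : ramp_coef q bb (N * c ord0) N i = c i.
  rewrite /ramp_coef /extend_by0; case: (unliftP ord0 i) => [j ->|->].
    by rewrite full_prior_lift /q /bb; field; rewrite gt_eqF.
  by rewrite full_prior_ord0 sum_q /N; field; rewrite -/N gt_eqF.
have pos_comb_expect a b h : is_experiment a b h ->
    pos_comb_integral a b h c =
    expect_on a b (mix_density h q) (ramp (N * c ord0) N \o posterior_comb h q bb).
  move=> hh; apply: eq_integral => x /[!inE] Dx /=.
  rewrite (ramp_posterior_comb hh) //; congr (Num.max _ 0)%:E.
  by apply: eq_bigr => i _; rewrite coefE.
rewrite !pos_comb_expect //; exact: (hLB q hq).2 bb _ (convex_ramp _ _).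
Qed.

Theorem lemma1 (R : realType) (n : nat) (theta : 'I_n.+1 -> R)
  (theta_inj : injective theta)
  (xl xu yl yu : R) (f g : 'I_n.+1 -> R -> R)
  (hF : is_experiment xl xu f) (hG : is_experiment yl yu g) :
  LB_ge xl xu f yl yu g <->
  (forall bb : 'I_n.+1 -> R,
     (\int[lebesgue_measure]_(y in `[yl, yu]%classic)
         (Num.max (\sum_(i < n.+1) bb i * g i y) 0)%:E
      <= \int[lebesgue_measure]_(x in `[xl, xu]%classic)
         (Num.max (\sum_(i < n.+1) bb i * f i x) 0)%:E)%E).
Proof.
(* Only the indices of the states matter, so theta and theta_inj are unused. *)
split; first exact: le_pos_comb_integral_of_LB_ge.
exact: LB_ge_of_le_pos_comb_integral.
Qed.
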